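(* Let $q\ge 2$ be an even integer, $m\ge 4$ an integer, $\pi$ a permutation of $\{0,1,\dots,m-3\}$, and $c\in\mathbb Z_q$. For $d\in\{0,1\}$ define the Boolean functions $\zeta^d,\eta^d$ in the variables $x_0,\dots,x_{m-3}$ (values in $\mathbb Z_2$) by $$\zeta^d=\sum_{\alpha=0}^{m-4}x_{\pi(\alpha)}x_{\pi(\alpha+1)}+d\,x_{\pi(m-3)},\qquad \eta^d=\sum_{\alpha=0}^{m-4}\bar x_{\pi(\alpha)}\bar x_{\pi(\alpha+1)}+\bar d\,\bar x_{\pi(m-3)}+d,$$ and the generalized Boolean function $g^d:\mathbb Z_2^m\to\mathbb Z_q$ by $$g^d=\frac q2\Big[\bar x_{m-1}x_{m-2}\,\zeta^d+x_{m-1}\bar x_{m-2}\,\eta^d+\bar d\,x_{m-1}x_{m-2}\Big]+c .$$ Then $(\mathbf a,\mathbf b)=\big(\Psi_{2^{m-2}-1}(g^0),\Psi_{2^{m-2}-1}(g^1)\big)$ is a $(2^{m-1}+2,\;2^{\pi(m-3)}+1)$-CZCP.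
   Context: $\omega=e^{2\pi\sqrt{-1}/q}$. For $x\in\{0,1\}$, $\bar x=1-x$. For an integer $0\le i<2^m$, $\mathbf r_i=(r_{i,0},\dots,r_{i,m-1})$ is its binary representation, $i=\sum_j r_{i,j}2^j$. For a function $f:\mathbb Z_2^m\to\mathbb Z_q$, $\Psi(f)$ is the length-$2^m$ complex sequence $(\omega^{f(\mathbf r_0)},\omega^{f(\mathbf r_1)},\dots,\omega^{f(\mathbf r_{2^m-1})})$, and for $0\le L<2^{m-1}$ the truncated sequence $\Psi_L(f)$ is obtained from $\Psi(f)$ by deleting its first $L$ and its last $L$ entries (so it has length $2^m-2L$). Aperiodic correlation: for complex sequences $\mathbf a,\mathbf b$ of length $N$, $\rho_{\mathbf a,\mathbf b}(\tau)=\sum_{k=0}^{N-1-\tau}a_k\overline{b_{k+\tau}}$ for $0\le\tau\le N-1$, $\rho_{\mathbf a,\mathbf b}(\tau)=\sum_{k=0}^{N-1+\tau}a_{k-\tau}\overline{b_k}$ for $-(N-1)\le\tau\le -1$, and $0$ for $|\tau|\ge N$; $\rho_{\mathbf a}=\rho_{\mathbf a,\mathbf a}$. CZCP: for positive integers $N,Z$ let $\mathcal T_1=\{1,\dots,Z\}$ and $\mathcal T_2=\{N-Z,\dots,N-1\}$. A pair $(\mathbf a,\mathbf b)$ of length-$N$ sequences is an $(N,Z)$-CZCP (cross Z-complementary pair) if (C1) $\rho_{\mathbf a}(\tau)+\rho_{\mathbf b}(\tau)=0$ for all $\tau$ with $|\tau|\in\mathcal T_1\cup\mathcal T_2$, and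 (C2) $\rho_{\mathbf a,\mathbf b}(\tau)+\rho_{\mathbf b,\mathbf a}(\tau)=0$ for all $\tau$ with $|\tau|\in\mathcal T_2$. *)

From HB Require Import structures.
From mathcomp Require Import all_boot all_order all_algebra all_fingroup all_field.
Set Implicit Arguments. Unset Strict Implicit. Unset Printing Implicit Defensive.
Import Order.TTheory GRing.Theory Num.Theory.
Local Open Scope ring_scope.

(* omega = e^{2 pi i / q} for even q: the (q/2)-th root of -1 with minimal
   non-negative argument, i.e. e^{i pi/(q/2)} (see numfield.v header). *)
Definition omega (q : nat) : algC := (q./2).-root (-1).

Definition bit (k j : nat) : bool := odd (k %/ 2 ^ j).

(* A generalized Boolean function Z_2^m -> Z_q is represented as a function
   from bit vectors (nat -> bool, x_j = j-th variable) to nat, read modulo q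
   (omega ^+ q = 1, so only the residue matters). *)
Definition Psi (q : nat) (f : (nat -> bool) -> nat) (k : nat) : algC :=
  omega q ^+ f (bit k).

(* Truncated sequence Psi_L(f): entry k is entry k+L of Psi(f),
   for 0 <= k < 2^m - 2L. *)
Definition PsiL (q L : nat) (f : (nat -> bool) -> nat) (k : nat) : algC :=
  Psi q f (k + L).

Definition rho (N : nat) (a b : nat -> algC) (tau : int) : algC :=
  match tau with
  | Posz t => \sum_(k < N - t) a k * (b (k + t)%N)^*
  | Negz t => \sum_(k < N - t.+1) a (k + t.+1)%N * (b k)^*
  end.

Definition CZCP (N Z : nat) (a b : nat -> algC) : Prop :=
  (forall tau : int,
      ((1 <= `|tau| <= Z)%N || (N - Z <= `|tau| <= N - 1)%N) ->
      rho N a a tau + rho N b b tau = 0) /\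
  (forall tau : int, (N - Z <= `|tau| <= N - 1)%N ->
      rho N a b tau + rho N b a tau = 0).

Definition permf (n : nat) (pi : 'S_n) (a : nat) : nat :=
  match insub a with Some i => nat_of_ord (pi i) | None => a end.

Definition zeta (m : nat) (pi : 'S_(m - 2)) (d : bool) (x : nat -> bool) : nat :=
  ((\sum_(0 <= a < m - 3) x (permf pi a) * x (permf pi a.+1))
   + d * x (permf pi (m - 3)))%N.

Definition eta (m : nat) (pi : 'S_(m - 2)) (d : bool) (x : nat -> bool) : nat :=
  ((\sum_(0 <= a < m - 3) (~~ x (permf pi a)) * (~~ x (permf pi a.+1)))
   + (~~ d) * (~~ x (permf pi (m - 3))) + d)%N.

Definition gfun (q m : nat) (pi : 'S_(m - 2)) (c : nat) (d : bool)
    (x : nat -> bool) : nat :=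
  (q./2 * ((~~ x (m - 1)%N) * x (m - 2)%N * zeta pi d x
           + x (m - 1)%N * (~~ x (m - 2)%N) * eta pi d x
           + (~~ d) * x (m - 1)%N * x (m - 2)%N) + c)%N.

From Pilot Require Import Defs.
From HB Require Import structures.
From mathcomp Require Import all_boot all_order all_algebra all_fingroup all_field.
From mathcomp Require Import zify ring.
Set Implicit Arguments. Unset Strict Implicit. Unset Printing Implicit Defensive.
Import Order.TTheory GRing.Theory Num.Theory.

(* Put M = 2^(m-2). The truncation keeps the 2M+2 entries of Psi(g^d) with
   index M-1 <= i <= 3M. The top variables x_(m-1) x_(m-2) split this window
   into one entry 00, M entries 01, M entries 10 and one entry 11; on the block
   10 the low bits run through complements, so there g^d reads +-zeta^(1-d)
   backwards. Up to the unimodular factor omega^c,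
     a = (1, A, rev B, -1),  b = (1, B, -rev A, 1),
   where (A, B) = ((-1)^zeta^0, (-1)^zeta^1) is the Golay complementary pair of
   Davis and Jedwab attached to the path pi. For shifts t < M the
   autocorrelations of (a, b) reduce to those of (A, B) plus cross terms that
   cancel in pairs. For shifts t >= 2M + 1 - 2^pi(m-3) only the first
   2^pi(m-3) + 1 entries meet the last ones; on the former a = b, because
   x_(pi(m-3)) = 0 there and so A = B, and on the latter b = -a. *)

Lemma bit0 y : bit y 0 = odd y.
Proof. by rewrite /bit expn0 divn1. Qed.

Lemma bitS y j : bit y j.+1 = bit y./2 j.
Proof. by rewrite /bit expnS divnMA -divn2. Qed.

Lemma bit_small y j : y < 2 ^ j -> bit y j = false.
Proof. by move=> h; rewrite /bit divn_small. Qed.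

Lemma bit_ge y j : bit y j -> 2 ^ j <= y.
Proof. by case: (ltnP y (2 ^ j)) => // /bit_small ->. Qed.

Lemma half_ltn_expS y n : y < 2 ^ n.+1 -> y./2 < 2 ^ n.
Proof. by rewrite -divn2 ltn_divLR // -expnSr. Qed.

Lemma eq_from_bits n y z : y < 2 ^ n -> z < 2 ^ n ->
  (forall j, j < n -> bit y j = bit z j) -> y = z.
Proof.
elim: n y z => [|n IH] y z; first by rewrite expn0 !ltnS !leqn0 => /eqP-> /eqP->.
move=> hy hz hb; rewrite -[y]odd_double_half -[z]odd_double_half -!bit0 hb //.
congr (_ + _.*2); apply: IH; rewrite ?half_ltn_expS // => j hj.
by rewrite -!bitS hb.
Qed.

Lemma bit_mulXnD n h y j : y < 2 ^ n ->
  bit (h * 2 ^ n + y) j = if j < n then bit y j else bit h (j - n).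
Proof.
move=> hy; case: ltnP => hj; rewrite /bit.
  rewrite -(subnK (ltnW hj)) expnD mulnA divnMDl ?expn_gt0 //.
  by rewrite oddD oddM oddX subn_eq0 leqNgt hj andbF.
rewrite -{1}(subnK hj) expnD (mulnC (2 ^ (j - n))) divnMA divnMDl ?expn_gt0 //.
by rewrite (divn_small hy) addn0.
Qed.

Lemma bit_compl n y j : y < 2 ^ n -> j < n -> bit (2 ^ n - 1 - y) j = ~~ bit y j.
Proof.
elim: n y j => [//|n IH] y j hy hj.
have hy2 := half_ltn_expS hy.
have -> : 2 ^ n.+1 - 1 - y = ~~ odd y + (2 ^ n - 1 - y./2).*2.
  move: hy hy2; rewrite -{1 3}[y]odd_double_half expnS -!muln2.
  by case: (odd y) => /=; lia.
case: j hj => [|j] hj; first by rewrite !bit0 oddD odd_double addbF oddb.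
by rewrite !bitS half_bit_double IH.
Qed.

Lemma bit_split y u : y = y %/ 2 ^ u.+1 * 2 ^ u.+1 + (bit y u * 2 ^ u + y %% 2 ^ u).
Proof.
have e := divn_eq (y %/ 2 ^ u) 2.
rewrite -divnMA -expnSr modn2 in e.
by rewrite /bit {1}(divn_eq y (2 ^ u)) {1}e expnSr mulnDl -mulnA [2 * _]mulnC addnA.
Qed.

Lemma low_bits_lt (b : bool) y u : b * 2 ^ u + y %% 2 ^ u < 2 ^ u.+1.
Proof.
have := ltn_pmod y (expn_gt0 2 u); rewrite expnS.
by case: b => /=; lia.
Qed.

Lemma addb_eq2r (a b e : bool) : (a (+) e == b (+) e) = (a == b).
Proof. by case: a b e => [] [] []. Qed.

Definition flip_at (x : nat -> bool) (u j : nat) : bool := x j (+) (j == u).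

Definition toggle (y u : nat) : nat := if bit y u then y - 2 ^ u else y + 2 ^ u.

Lemma toggleE y u :
  toggle y u = y %/ 2 ^ u.+1 * 2 ^ u.+1 + (~~ bit y u * 2 ^ u + y %% 2 ^ u).
Proof.
have := bit_split y u; rewrite /toggle.
set Q := _ * 2 ^ u.+1; set r := y %% _.
by case: (bit y u) => /=; lia.
Qed.

Lemma bit_toggle y u : bit (toggle y u) =1 flip_at (bit y) u.
Proof.
move=> j; rewrite /flip_at toggleE [in RHS](bit_split y u) !bit_mulXnD ?low_bits_lt ?ltn_pmod ?expn_gt0 //.
case: ltnP => hj; last by rewrite gtn_eqF ?addbF.
case: ltnP => hju; first by rewrite ltn_eqF ?addbF.
have -> : j = u by lia.
by rewrite subnn eqxx !bit0 !oddb addbT.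
Qed.

Lemma toggleK u : involutive (toggle ^~ u).
Proof.
move=> y; rewrite {1}/toggle bit_toggle /flip_at eqxx addbT /toggle.
by case E: (bit y u) => /=; [have := bit_ge E|]; lia.
Qed.

Lemma toggleD y t u : bit y u = bit (y + t) u -> toggle y u + t = toggle (y + t) u.
Proof. by rewrite /toggle => <-; case E: (bit y u); [have := bit_ge E|]; lia. Qed.

Lemma toggle_lt n y u : y < 2 ^ n -> u < n -> toggle y u < 2 ^ n.
Proof.
move=> hy hu; rewrite toggleE.
have hn : 2 ^ n = 2 ^ (n - u.+1) * 2 ^ u.+1 by rewrite -expnD subnK.
have hQ : y %/ 2 ^ u.+1 < 2 ^ (n - u.+1) by rewrite ltn_divLR ?expn_gt0 // -hn.
have := leq_mul hQ (leqnn (2 ^ u.+1)); rewrite -hn mulSn.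
by have := low_bits_lt (~~ bit y u) y u; lia.
Qed.

Local Open Scope ring_scope.

Definition corr (R : ringType) (N : nat) (f g : nat -> R) (t : nat) : R :=
  \sum_(k < N - t) f k * g (k + t)%N.

Lemma sum_eq0_opp_involution (R : numDomainType) (n : nat) (F : nat -> R)
    (io : nat -> nat) :
  (forall k, (k < n)%N -> (io k < n)%N) ->
  (forall k, (k < n)%N -> io (io k) = k) ->
  (forall k, (k < n)%N -> F (io k) = - F k) ->
  \sum_(k < n) F k = 0.
Proof.
move=> io_lt ioK F_io.
pose h (k : 'I_n) : 'I_n := Ordinal (io_lt k (ltn_ord k)).
have h_inj : injective h.
  move=> a b /(congr1 val) /= eab; apply: ord_inj.
  by rewrite -(ioK a) ?ltn_ord // eab ioK.
have /eqP : (\sum_(k < n) F k) *+ 2 = 0.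
  rewrite mulr2n {1}(reindex_inj h_inj) /= -big_split /=.
  by apply: big1 => k _; rewrite F_io ?addNr.
by rewrite mulrn_eq0 /= => /eqP.
Qed.

Definition path_form (s : nat -> nat) (n : nat) (x : nat -> bool) : nat :=
  \sum_(0 <= a < n) x (s a) * x (s a.+1).

Definition golay_form (s : nat -> nat) (n : nat) (d : bool) (x : nat -> bool) : nat :=
  path_form s n x + d * x (s n).

Section GolayPair.

Variables (R : numDomainType) (n : nat) (s : nat -> nat).
Hypothesis s_le : forall a, (a <= n)%N -> (s a <= n)%N.
Hypothesis s_inj : forall a b, (a <= n)%N -> (b <= n)%N -> (s a == s b) = (a == b).
Hypothesis s_surj : forall j, (j <= n)%N -> exists2 a, (a <= n)%N & s a = j.

Local Notation sg k := ((-1 : R) ^+ k).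

Lemma sg_xor_mul (b c e f : bool) : ~~ (e && f) ->
  sg ((b (+) e) * (c (+) f))%N = sg (b && c) * sg (b && f) * sg (e && c).
Proof.
by case: e; case: f => // _; case: b; case: c;
  rewrite /= ?(mul0n, muln0, muln1, expr0, expr1, mulr1, mul1r, mulrNN).
Qed.

Lemma path_form_flip x w : (0 < w <= n)%N ->
  sg (path_form s n (flip_at x (s w))) =
  sg (path_form s n x) * sg (x (s w.-1)) * sg ((w < n)%N && x (s w.+1)).
Proof.
move=> hw; rewrite /path_form !expr_sum.
rewrite (eq_big_nat _ _ (F2 := fun a => sg (x (s a) && x (s a.+1)) *
   sg (x (s a) && (a.+1 == w)) * sg ((a == w) && x (s a.+1)))); last first.
  move=> a ha; rewrite /flip_at !s_inj; try lia.
  by apply: sg_xor_mul; apply/negP => /andP [/eqP ? /eqP ?]; lia.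
rewrite !big_split /=; congr (_ * _ * _).
- by apply: eq_bigr => a _; rewrite mulnb.
- rewrite (eq_bigr (fun a => if a == w.-1 then sg (x (s a)) else 1)); last first.
    move=> a _; case: (a =P w.-1) => [->|ne]; first by rewrite prednK ?eqxx ?andbT //; lia.
    have -> : (a.+1 == w) = false by lia.
    by rewrite andbF.
  by rewrite -big_mkcond big_nat1_eq; have -> : (0 <= w.-1 < n)%N by lia.
rewrite (eq_bigr (fun a => if a == w then sg (x (s a.+1)) else 1)); last first.
  by move=> a _; case: eqP.
by rewrite -big_mkcond big_nat1_eq; case: (w < n)%N.
Qed.

Definition golay_term (x x' : nat -> bool) : R :=
  sg (golay_form s n false x) * sg (golay_form s n false x')
  + sg (golay_form s n true x) * sg (golay_form s n true x').

Lemma golay_termE x x' : golay_term x x' =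
  sg (path_form s n x) * sg (path_form s n x') * (1 + sg (x (s n)) * sg (x' (s n))).
Proof. by rewrite /golay_term /golay_form !exprD !mul0n !expr0 !mulr1; ring. Qed.

Lemma eq_golay_term x1 x2 x1' x2' :
  x1 =1 x2 -> x1' =1 x2' -> golay_term x1 x1' = golay_term x2 x2'.
Proof.
move=> e e'; have ext y y' d : y =1 y' -> golay_form s n d y = golay_form s n d y'.
  by move=> ey; rewrite /golay_form /path_form ey; under eq_bigr do rewrite !ey.
by rewrite /golay_term !(ext _ _ _ e) !(ext _ _ _ e').
Qed.

Lemma golay_term_eq0 x x' : x (s n) != x' (s n) -> golay_term x x' = 0.
Proof.
rewrite golay_termE; case: (x (s n)) (x' (s n)) => [] [] //= _.
  by rewrite expr1 expr0 mulr1 addrN mulr0.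
by rewrite expr1 expr0 mul1r addrN mulr0.
Qed.

Lemma golay_term_flip x x' v : (v < n)%N -> x (s v) != x' (s v) ->
  (forall b, (v < b <= n)%N -> x (s b) = x' (s b)) ->
  golay_term (flip_at x (s v.+1)) (flip_at x' (s v.+1)) = - golay_term x x'.
Proof.
move=> hv ne agree.
have sq k : sg k * sg k = 1 by rewrite -expr2 sqrr_sign.
have opp : sg (x (s v)) * sg (x' (s v)) = -1.
  by rewrite -signr_addb; case: (x (s v)) (x' (s v)) ne => [] [] //= _; rewrite expr1.
rewrite !golay_termE !path_form_flip /= ?ltnS ?hv ?andbT // /flip_at (agree n) ?leqnn ?hv //.
have -> : (v.+1 < n)%N && x (s v.+2) = (v.+1 < n)%N && x' (s v.+2).
  by case: ltnP => //= ?; rewrite agree //; lia.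
set P := sg (path_form s n x); set P' := sg (path_form s n x').
set c := sg (_ && _); set e := sg (_ (+) _).
transitivity (P * P' * (sg (x (s v)) * sg (x' (s v))) * (c * c) * (1 + e * e)); first by ring.
by rewrite opp !sq; ring.
Qed.

(* Davis-Jedwab: when y and y + t agree in the last path variable x_(s n),
   toggling in both the variable that follows the last path position where
   they differ is an involution on the terms of the correlation that reverses
   the sign of each term; when they disagree there, the term vanishes. *)
Section Involution.

Variable t : nat.
Hypothesis t_range : (0 < t < 2 ^ n.+1)%N.

Definition differ (y a : nat) : bool := bit y (s a) != bit (y + t) (s a).
Definition last_differ (y : nat) : nat := (\max_(a < n.+1 | differ y a) a)%N.
Definition pivot (y : nat) : nat := s (last_differ y).+1.
Definition involution (y : nat) : nat :=
  if bit y (s n) == bit (y + t) (s n) then toggle y (pivot y) else y.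

Lemma last_differP y : (y + t < 2 ^ n.+1)%N -> bit y (s n) = bit (y + t) (s n) ->
  [/\ differ y (last_differ y), (last_differ y < n)%N &
      forall b, (b <= n)%N -> differ y b -> (b <= last_differ y)%N].
Proof.
move=> hyt agree_n.
have [j hj] : exists j : 'I_n.+1, bit y j != bit (y + t) j.
  apply/existsP; apply: contraT; rewrite negb_exists => /forallP same.
  suff : y = y + t by lia.
  apply: (@eq_from_bits n.+1) => [||i hi]; [lia | done |].
  exact/eqP/negPn/(same (Ordinal hi)).
have [a ha saj] := s_surj (ltn_ord j : (j <= n)%N).
have D_last : differ y (last_differ y).
  pose a' := Ordinal (ha : (a < n.+1)%N).
  have Da : differ y a' by rewrite /differ /= saj.
  by rewrite /last_differ (bigop.bigmax_eq_arg a' Da); case: arg_maxnP.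
have le_last b : (b <= n)%N -> differ y b -> (b <= last_differ y)%N.
  by move=> hb; apply: (bigop.leq_bigmax_cond (Ordinal (hb : (b < n.+1)%N))).
split=> //.
have : (last_differ y <= n)%N by apply/bigop.bigmax_leqP => i _; rewrite -ltnS.
rewrite leq_eqVlt => /orP[/eqP e|//].
by move: D_last; rewrite e /differ agree_n eqxx.
Qed.

Lemma pivot_agree y : (y + t < 2 ^ n.+1)%N -> bit y (s n) = bit (y + t) (s n) ->
  bit y (pivot y) = bit (y + t) (pivot y).
Proof.
move=> hyt agree_n; have [_ lt_n le_last] := last_differP hyt agree_n.
by apply/eqP; apply: contraT => ne; have := le_last _ lt_n ne; lia.
Qed.

Lemma involution_lt y : (y < 2 ^ n.+1 - t)%N -> (involution y < 2 ^ n.+1 - t)%N.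
Proof.
rewrite /involution; case: ifP => // /eqP agree_n hy.
have hyt : (y + t < 2 ^ n.+1)%N by lia.
have [_ lt_n _] := last_differP hyt agree_n.
have := toggle_lt hyt (s_le lt_n : (pivot y < n.+1)%N).
by rewrite -toggleD ?pivot_agree //; lia.
Qed.

Lemma differ_toggle y : (y + t < 2 ^ n.+1)%N -> bit y (s n) = bit (y + t) (s n) ->
  differ (toggle y (pivot y)) =1 differ y.
Proof.
move=> hyt agree_n a.
by rewrite /differ toggleD ?pivot_agree // !bit_toggle /flip_at addb_eq2r.
Qed.

Lemma involutionK y : (y < 2 ^ n.+1 - t)%N -> involution (involution y) = y.
Proof.
rewrite {2}/involution; case: ifP => [/eqP agree_n hy|ne _]; last by rewrite /involution ne.
have hyt : (y + t < 2 ^ n.+1)%N by lia.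
have same_pivot : pivot (toggle y (pivot y)) = pivot y.
  by rewrite /pivot /last_differ; under eq_bigl do rewrite (differ_toggle hyt agree_n).
rewrite /involution toggleD ?pivot_agree // !bit_toggle /flip_at addb_eq2r.
by rewrite agree_n eqxx same_pivot toggleK.
Qed.

Lemma golay_term_involution y : (y < 2 ^ n.+1 - t)%N ->
  golay_term (bit (involution y)) (bit (involution y + t)) =
  - golay_term (bit y) (bit (y + t)).
Proof.
rewrite /involution; case: ifP => [/eqP agree_n hy|/negbT ne _]; last first.
  by rewrite golay_term_eq0 ?oppr0.
have hyt : (y + t < 2 ^ n.+1)%N by lia.
have [D_last lt_n le_last] := last_differP hyt agree_n.
rewrite toggleD ?pivot_agree // (eq_golay_term (bit_toggle _ _) (bit_toggle _ _)).
apply: golay_term_flip => // b /andP[lt_b le_bn].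
by apply/eqP; apply: contraT => nb; have := le_last _ le_bn nb; lia.
Qed.

Lemma golay_complementary :
  corr (2 ^ n.+1) (fun y => sg (golay_form s n false (bit y)))
                  (fun y => sg (golay_form s n false (bit y))) t
  + corr (2 ^ n.+1) (fun y => sg (golay_form s n true (bit y)))
                    (fun y => sg (golay_form s n true (bit y))) t = 0.
Proof.
rewrite /corr -big_split /=.
apply: (sum_eq0_opp_involution (F := fun y => golay_term (bit y) (bit (y + t)))
  (io := involution)) => y hy.
- exact: involution_lt.
- exact: involutionK.
- exact: golay_term_involution.
Qed.

End Involution.

End GolayPair.

Definition frame (R : Type) (M : nat) (u0 : R) (F G : nat -> R) (u1 : R) (k : nat) : R :=
  if k == 0%N then u0 else if (k <= M)%N then F k.-1
  else if (k <= M + M)%N then G (M + M - k)%N else u1.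

Section FrameValues.

Variables (R : Type) (M : nat) (u0 u1 : R) (F G : nat -> R).

Lemma frame_first : frame M u0 F G u1 0 = u0.
Proof. by []. Qed.

Lemma frame_left k : (0 < k <= M)%N -> frame M u0 F G u1 k = F k.-1.
Proof. by move=> hk; rewrite /frame ifF 1?ifT //; lia. Qed.

Lemma frame_right k : (M < k <= M + M)%N -> frame M u0 F G u1 k = G (M + M - k)%N.
Proof. by move=> hk; rewrite /frame ifF 1?ifF 1?ifT //; lia. Qed.

Lemma frame_last : frame M u0 F G u1 (M + M).+1 = u1.
Proof. by rewrite /frame ifF 1?ifF 1?ifF //; lia. Qed.

End FrameValues.

Section FramedPair.

Variables (R : comRingType) (A B : nat -> R) (M : nat).

Local Notation a := (frame M 1 A B (-1)).
Local Notation b := (frame M 1 B (fun y => - A y) 1).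

Section SmallShift.

Variable t : nat.
Hypothesis t_range : (0 < t < M)%N.
Hypothesis golay : \sum_(0 <= y < M - t) (A y * A (y + t)%N + B y * B (y + t)%N) = 0.

Local Notation T k := (a k * a (k + t)%N + b k * b (k + t)%N).

Lemma frame_terms_left : \sum_(1 <= k < (M - t).+1) T k = 0.
Proof.
rewrite big_add1 -[RHS]golay; apply: eq_big_nat => i hi.
by rewrite !frame_left ?addSn //; lia.
Qed.

Lemma frame_terms_right : \sum_(M.+1 <= k < M + M + 1 - t) T k = 0.
Proof.
rewrite -[M.+1]add0n big_addn -[RHS]golay.
have -> : (M + M + 1 - t - M.+1 = M - t)%N by lia.
rewrite big_nat_rev /=; apply: eq_big_nat => i hi.
rewrite !frame_right; try lia.
rewrite mulrNN addrC mulrC [B _ * _]mulrC.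
have -> : (M + M - (0 + (M - t) - i.+1 + M.+1) = i + t)%N by lia.
by have -> : (M + M - (0 + (M - t) - i.+1 + M.+1 + t) = i)%N by lia.
Qed.

(* Here k lies in the second quarter and k + t in the third; the terms cancel
   in pairs under the reflection k.-1 |-> M + M - (k + t). *)
Lemma frame_terms_cross : \sum_((M - t).+1 <= k < M.+1) T k = 0.
Proof.
rewrite (eq_big_nat _ _ (F2 := fun k => A k.-1 * B (M + M - (k + t))%N
                                    - B k.-1 * A (M + M - (k + t))%N)); last first.
  move=> k hk; rewrite [a k]frame_left 1?[b k]frame_left; try lia.
  by rewrite [a _]frame_right 1?[b _]frame_right ?mulrN //; lia.
rewrite sumrB; apply/eqP; rewrite subr_eq0; apply/eqP.
rewrite big_nat_rev /=; apply: eq_big_nat => i hi.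
by rewrite mulrC; congr (_ * _); congr A || congr B; lia.
Qed.

Lemma frame_terms_ends : T 0%N + T (M + M + 1 - t)%N = 0.
Proof.
have -> : (M + M + 1 - t + t = (M + M).+1)%N by lia.
rewrite add0n !frame_first !frame_last [a t]frame_left 1?[b t]frame_left; try lia.
rewrite [a _]frame_right 1?[b _]frame_right; try lia.
have -> : (M + M - (M + M + 1 - t) = t.-1)%N by lia.
by rewrite !mul1r mulrN1 mulr1; ring.
Qed.

End SmallShift.

Lemma frame_corr_small t : (0 < t < M)%N ->
  corr M A A t + corr M B B t = 0 ->
  corr (M + M + 2) a a t + corr (M + M + 2) b b t = 0.
Proof.
move=> ht; rewrite /corr -!big_split /=.
rewrite -(big_mkord xpredT (fun y => A y * A (y + t)%N + B y * B (y + t)%N)) => golay.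
rewrite -(big_mkord xpredT (fun k => a k * a (k + t)%N + b k * b (k + t)%N)).
have -> : (M + M + 2 - t = (M + M + 1 - t).+1)%N by lia.
rewrite big_nat_recr /=; last by lia.
rewrite (@big_cat_nat _ _ _ 1) //; last by lia.
rewrite (@big_cat_nat _ _ _ (M - t).+1 1); try lia.
rewrite (@big_cat_nat _ _ _ M.+1 (M - t).+1); try lia.
rewrite frame_terms_left ?frame_terms_cross ?frame_terms_right //.
by rewrite big_nat1 /= !addr0 frame_terms_ends.
Qed.

Lemma frame_corr_large K t : (K <= M)%N -> (forall y, (y < K)%N -> A y = B y) ->
  (M + M + 1 - K <= t <= M + M + 1)%N ->
  corr (M + M + 2) a a t + corr (M + M + 2) b b t = 0 /\
  corr (M + M + 2) a b t + corr (M + M + 2) b a t = 0.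
Proof.
move=> le_KM AB ht.
have head k : (k < M + M + 2 - t)%N -> a k = b k.
  move=> hk; case: (posnP k) => [-> //|k_gt0].
  by rewrite !frame_left ?AB //; lia.
have tail k : (k < M + M + 2 - t)%N -> b (k + t)%N = - a (k + t)%N.
  move=> hk; case: (ltnP (k + t) (M + M).+1) => hkt.
    by rewrite !frame_right ?AB //; lia.
  have -> : (k + t = (M + M).+1)%N by lia.
  by rewrite !frame_last opprK.
by split; rewrite /corr -big_split /=; apply: big1 => k _;
  rewrite (head k (ltn_ord k)) (tail k (ltn_ord k)); ring.
Qed.

End FramedPair.

Section Correlation.

Implicit Types (f g a b : nat -> algC) (w : algC).

Lemma rho_scale N w f g a b tau : w * w^* = 1 ->
  (forall k, (k < N)%N -> a k = w * f k) -> (forall k, (k < N)%N -> b k = w * g k) ->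
  rho N a b tau = rho N f g tau.
Proof.
move=> unit_w af bg; case: tau => t; apply: eq_bigr => k _; have := ltn_ord k;
  by move=> hk; rewrite af ?bg ?rmorphM 1?mulrACA ?unit_w ?mul1r //; lia.
Qed.

Lemma rho_Posz_real N f g t : (forall k, (g k)^* = g k) ->
  rho N f g (Posz t) = corr N f g t.
Proof. by move=> g_real; apply: eq_bigr => k _; rewrite g_real. Qed.

Lemma rho_Negz_real N f g t : (forall k, (g k)^* = g k) ->
  rho N f g (Negz t) = corr N g f t.+1.
Proof. by move=> g_real; apply: eq_bigr => k _; rewrite g_real mulrC. Qed.

Lemma CZCP_scale N Z w f g a b : w * w^* = 1 ->
  (forall k, (k < N)%N -> a k = w * f k) -> (forall k, (k < N)%N -> b k = w * g k) ->
  CZCP N Z f g -> CZCP N Z a b.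
Proof.
move=> unit_w af bg [auto cross]; split=> tau ht.
  by rewrite (rho_scale _ unit_w af af) (rho_scale _ unit_w bg bg) auto.
by rewrite (rho_scale _ unit_w af bg) (rho_scale _ unit_w bg af) cross.
Qed.

Lemma CZCP_real N Z f g : (forall k, (f k)^* = f k) -> (forall k, (g k)^* = g k) ->
  (forall t, ((1 <= t <= Z) || (N - Z <= t <= N - 1))%N ->
     corr N f f t + corr N g g t = 0) ->
  (forall t, (N - Z <= t <= N - 1)%N -> corr N f g t + corr N g f t = 0) ->
  CZCP N Z f g.
Proof.
move=> f_real g_real auto cross; split=> -[t|t] ht.
- by rewrite !rho_Posz_real // auto.
- by rewrite !rho_Negz_real // auto.
- by rewrite !rho_Posz_real // cross.
- by rewrite !rho_Negz_real // addrC cross.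
Qed.

End Correlation.

Lemma frame_real (M : nat) (u0 u1 : algC) (F G : nat -> algC) k :
  u0^* = u0 -> u1^* = u1 -> (forall y, (F y)^* = F y) -> (forall y, (G y)^* = G y) ->
  (frame M u0 F G u1 k)^* = frame M u0 F G u1 k.
Proof. by move=> *; rewrite /frame; case: ifP => _ //; case: ifP => _ //; case: ifP. Qed.

Lemma permfE n (pi : 'S_n) a (lt_an : (a < n)%N) : permf pi a = pi (Ordinal lt_an).
Proof. by rewrite /permf insubT. Qed.

Lemma permf_lt n (pi : 'S_n) a : (a < n)%N -> (permf pi a < n)%N.
Proof. by move=> lt_an; rewrite (permfE _ lt_an). Qed.

Lemma permf_inj n (pi : 'S_n) a b : (a < n)%N -> (b < n)%N ->
  (permf pi a == permf pi b) = (a == b).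
Proof.
move=> lt_an lt_bn; rewrite (permfE _ lt_an) (permfE _ lt_bn).
by rewrite (inj_eq val_inj) (inj_eq perm_inj) -(inj_eq val_inj).
Qed.

Lemma permf_surj n (pi : 'S_n) j : (j < n)%N -> exists2 a, (a < n)%N & permf pi a = j.
Proof.
move=> lt_jn; exists ((pi^-1)%g (Ordinal lt_jn)); first exact: ltn_ord.
rewrite (permfE _ (ltn_ord _)).
have -> : Ordinal (ltn_ord ((pi^-1)%g (Ordinal lt_jn))) = (pi^-1)%g (Ordinal lt_jn).
  exact: val_inj.
by rewrite permKV.
Qed.

Local Notation sg k := ((-1 : algC) ^+ k).

Definition zeta_seq m (pi : 'S_(m - 2)) (d : bool) (y : nat) : algC := sg (zeta pi d (bit y)).

Lemma zeta_ext m (pi : 'S_(m - 2)) d x x' : (4 <= m)%N ->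
  (forall j, (j < m - 2)%N -> x j = x' j) -> zeta pi d x = zeta pi d x'.
Proof.
move=> m4 eqx; rewrite /zeta; congr (_ + _)%N.
  by apply: eq_big_nat => a ha; rewrite !eqx //; apply: permf_lt; lia.
by rewrite eqx //; apply: permf_lt; lia.
Qed.

Lemma eta_ext m (pi : 'S_(m - 2)) d x x' : (4 <= m)%N ->
  (forall j, (j < m - 2)%N -> x j = x' j) -> Defs.eta pi d x = Defs.eta pi d x'.
Proof.
move=> m4 eqx; rewrite /Defs.eta; congr (_ + _ + _)%N.
  by apply: eq_big_nat => a ha; rewrite !eqx //; apply: permf_lt; lia.
by rewrite eqx //; apply: permf_lt; lia.
Qed.

Lemma eta_false m (pi : 'S_(m - 2)) x :
  Defs.eta pi false x = zeta pi true (fun j => ~~ x j).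
Proof. by rewrite /Defs.eta /zeta /= addn0 mul1n. Qed.

Lemma eta_true m (pi : 'S_(m - 2)) x :
  Defs.eta pi true x = (zeta pi false (fun j => ~~ x j)).+1.
Proof. by rewrite /Defs.eta /zeta /= !mul0n !addn0 addn1. Qed.

Lemma omega_half q : (2 <= q)%N -> omega q ^+ q./2 = -1.
Proof. by move=> q2; rewrite /omega rootCK //; case: q q2 => [|[|q]]. Qed.

Lemma omega_unit q c : (2 <= q)%N -> omega q ^+ c * (omega q ^+ c)^* = 1.
Proof.
move=> q2; have half_gt0 : (0 < q./2)%N by case: q q2 => [|[|q]].
by rewrite -normCK normrX /omega norm_rootC normrN normr1 rootC1 ?expr1n.
Qed.

Lemma Psi_gfun_block q m (pi : 'S_(m - 2)) c d h y :
  (2 <= q)%N -> (4 <= m)%N -> (h < 4)%N -> (y < 2 ^ (m - 2))%N ->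
  Psi q (gfun q pi c d) (h * 2 ^ (m - 2) + y) = omega q ^+ c *
  sg (match h with 0 => 0 | 1 => zeta pi d (bit y) | 2 => Defs.eta pi d (bit y)
                 | _ => ~~ d end)%N.
Proof.
move=> q2 m4 h4 hy; rewrite /Psi /gfun exprD exprM omega_half // mulrC; congr (_ * _).
have low j : (j < m - 2)%N -> bit (h * 2 ^ (m - 2) + y) j = bit y j.
  by move=> hj; rewrite bit_mulXnD // hj.
rewrite (zeta_ext _ _ m4 low) (eta_ext _ _ m4 low) !bit_mulXnD // ltnn subnn.
rewrite ifF; last by lia.
have -> : (m - 1 - (m - 2) = 1)%N by lia.
by clear low; case: h h4 => [|[|[|[|]]]] //= _; rewrite ?mul0n ?mul1n ?muln0 ?muln1 ?addn0 ?add0n.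
Qed.

Lemma PsiL_gfun q m (pi : 'S_(m - 2)) c d k :
  (2 <= q)%N -> (4 <= m)%N -> (k < 2 ^ (m - 2) + 2 ^ (m - 2) + 2)%N ->
  PsiL q (2 ^ (m - 2) - 1) (gfun q pi c d) k = omega q ^+ c *
  (if d then frame (2 ^ (m - 2)) 1 (zeta_seq pi true) (fun y => - zeta_seq pi false y) 1 k
   else frame (2 ^ (m - 2)) 1 (zeta_seq pi false) (zeta_seq pi true) (-1) k).
Proof.
move=> q2 m4; rewrite /PsiL; set M := (2 ^ (m - 2))%N => hk.
have M_gt0 : (0 < M)%N by rewrite expn_gt0.
have block := @Psi_gfun_block q m pi c d _ _ q2 m4.
case: (posnP k) => [->|k_gt0].
  by rewrite (_ : (0 + (M - 1) = 0 * M + (M - 1))%N) ?block //; [case: d {block} | lia].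
case: (leqP k M) => le_kM.
  rewrite (_ : (k + (M - 1) = 1 * M + k.-1)%N) ?block //; try lia.
  by case: d {block}; rewrite frame_left //; lia.
case: (leqP k (M + M)) => le_k2M.
  rewrite (_ : (k + (M - 1) = 2 * M + (k - M - 1))%N) ?block //; try lia.
  have compl j : (j < m - 2)%N -> ~~ bit (k - M - 1) j = bit (M + M - k) j.
    move=> hj; rewrite -(@bit_compl (m - 2)) //; last by rewrite -/M; lia.
    by congr bit; rewrite -/M; lia.
  case: d {block}; rewrite frame_right //; try lia.
    by rewrite eta_true exprS mulN1r (zeta_ext _ _ m4 compl).
  by rewrite eta_false (zeta_ext _ _ m4 compl).
have -> : k = (M + M).+1 by lia.
rewrite (_ : ((M + M).+1 + (M - 1) = 3 * M + 0)%N) ?block //; try lia.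
by case: d {block}; rewrite frame_last.
Qed.

Lemma zeta_seq_golay m (pi : 'S_(m - 2)) t : (4 <= m)%N -> (0 < t < 2 ^ (m - 2))%N ->
  corr (2 ^ (m - 2)) (zeta_seq pi false) (zeta_seq pi false) t
  + corr (2 ^ (m - 2)) (zeta_seq pi true) (zeta_seq pi true) t = 0.
Proof.
move=> m4; rewrite (_ : (2 ^ (m - 2) = 2 ^ (m - 3).+1)%N); last by congr expn; lia.
apply: (@golay_complementary _ _ (permf pi)).
- by move=> a ha; have := @permf_lt _ pi a; lia.
- by move=> a b ha hb; apply: permf_inj; lia.
- by move=> j hj; have [a ha <-] := @permf_surj _ pi j (ltac:(lia)); exists a => //; lia.
Qed.

Lemma zeta_seq_agree m (pi : 'S_(m - 2)) y : (y < 2 ^ permf pi (m - 3))%N ->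
  zeta_seq pi false y = zeta_seq pi true y.
Proof. by move=> hy; rewrite /zeta_seq /zeta bit_small // !muln0. Qed.

Theorem theorem1 (q m : nat) (pi : 'S_(m - 2)) (c : nat) :
  (2 <= q)%N -> ~~ odd q -> (4 <= m)%N -> (c < q)%N ->
  CZCP (2 ^ (m - 1) + 2) (2 ^ permf pi (m - 3) + 1)
    (PsiL q (2 ^ (m - 2) - 1) (gfun q pi c false))
    (PsiL q (2 ^ (m - 2) - 1) (gfun q pi c true)).
Proof.
move=> q2 _ m4 _; set M := (2 ^ (m - 2))%N; set p := permf pi (m - 3).
have eM : M = (2 * 2 ^ (m - 3))%N by rewrite /M -expnS; congr expn; lia.
have -> : (2 ^ (m - 1) + 2 = M + M + 2)%N.
  by rewrite /M (_ : (m - 1 = (m - 2).+1)%N) ?expnS; lia.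
have le_pM : (2 ^ p <= 2 ^ (m - 3))%N.
  by rewrite leq_pexp2l //; have := @permf_lt _ pi (m - 3); rewrite -/p; lia.
have ge2 : (2 <= 2 ^ (m - 3))%N by rewrite -{1}(expn1 2) leq_pexp2l //; lia.
apply: (CZCP_scale (omega_unit c q2)) => [k hk|k hk|]; [exact: PsiL_gfun..|].
have sign_real d y : (zeta_seq pi d y)^* = zeta_seq pi d y by rewrite rmorph_sign.
have le_KM : (2 ^ p <= M)%N by lia.
have large t := @frame_corr_large _ _ _ _ _ t le_KM (@zeta_seq_agree m pi).
apply: CZCP_real => [k|k|t ht|t ht].
- by apply: frame_real => [||y|y]; rewrite ?rmorph1 ?rmorphN1 ?sign_real.
- by apply: frame_real => [||y|y]; rewrite ?rmorph1 ?rmorphN /= ?sign_real.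
- case/orP: ht => ht; last by case: (large t (ltac:(lia))).
  by apply: frame_corr_small; [lia | apply: zeta_seq_golay; lia].
- by case: (large t (ltac:(lia))).
Qed.
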